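(* Let $n\ge 3$ and let $B_n(r,q)$ be the generic BMW algebra over $\mathbb{K}=\mathbb{Q}(r,q)$ (defined in the context). For all integers $k,h\ge 0$ and all $1\le i\le n-2$, $$Y_i(k)\,Y_{i+1}(k+h)\,Y_i(h)=Y_{i+1}(h)\,Y_i(k+h)\,Y_{i+1}(k),$$ and for all $k,h\ge 0$ and all $1\le i,j\le n-1$ with $|i-j|>1$, $$Y_i(k)Y_j(h)=Y_j(h)Y_i(k).$$
   Context: Let $r,q$ be indeterminates, $\mathbb{K}=\mathbb{Q}(r,q)$, and $x=1+\frac{r-r^{-1}}{q-q^{-1}}$. The generic BMW algebra $B_n(r,q)$ is the unital associative $\mathbb{K}$-algebra generated by $T_i^{\pm1},E_i$ ($1\le i\le n-1$) subject to: $T_i-T_i^{-1}=(q-q^{-1})(1-E_i)$; $E_i^2=xE_i$; $T_iT_{i+1}T_i=T_{i+1}T_iT_{i+1}$ ($1\le i\le n-2$); $T_iT_j=T_jT_i$ ($|i-j|>1$); $E_iE_{i+1}E_i=E_i$, $E_{i+1}E_iE_{i+1}=E_{i+1}$; $T_iT_{i+1}E_i=E_{i+1}E_i$, $T_{i+1}T_iE_{i+1}=E_iE_{i+1}$; $E_iT_i=T_iE_i=r^{-1}E_i$; $E_iT_{i+1}E_i=rE_i$, $E_{i+1}T_iE_{i+1}=rE_{i+1}$ (with $T_i^{\pm1}$ mutually inverse). For an integer $k\ge0$ let $[k]=\frac{q^k-q^{-k}}{q-q^{-1}}$ (so $[0]=0$), and for $1\le i\le n-1$ define $$Y_i(k)=\frac{-1}{[k+1]}\Big([k]T_i-q^k+\frac{q^k-q^{-k}}{1+rq^{-2k+1}}E_i\Big)\in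 B_n(r,q).$$ *)

From HB Require Import structures.
From mathcomp Require Import all_boot all_order all_algebra.
Set Implicit Arguments. Unset Strict Implicit. Unset Printing Implicit Defensive.
Import Order.TTheory GRing.Theory Num.Theory.
Local Open Scope ring_scope.

(* K = Q(r,q): the fraction field of Q[q][r]. *)
Definition Kf : fieldType := {fraction {poly {poly rat}}}.

Definition rr : Kf := tofrac ('X : {poly {poly rat}}).
Definition qq : Kf := tofrac ((('X : {poly rat}))%:P : {poly {poly rat}}).

Definition qint (k : nat) : Kf := (qq ^+ k - qq ^- k) / (qq - qq^-1).

Definition xx : Kf := 1 + (rr - rr^-1) / (qq - qq^-1).

(* The defining relations of B_n(r,q), for families T, Ti (= T^-1), E
   indexed by 1 <= i <= n-1 (indices outside this range are unused). *)
Definition bmw_rel (n : nat) (A : algType Kf) (T Ti E : nat -> A) : Prop :=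
  (forall i, (1 <= i <= n.-1)%N ->
     [/\ T i * Ti i = 1, Ti i * T i = 1,
         T i - Ti i = (qq - qq^-1) *: (1 - E i),
         E i * E i = xx *: E i &
         E i * T i = rr^-1 *: E i /\ T i * E i = rr^-1 *: E i]) /\
  (forall i, (1 <= i <= n - 2)%N ->
     [/\ T i * T i.+1 * T i = T i.+1 * T i * T i.+1,
         E i * E i.+1 * E i = E i /\ E i.+1 * E i * E i.+1 = E i.+1,
         T i * T i.+1 * E i = E i.+1 * E i /\ T i.+1 * T i * E i.+1 = E i * E i.+1 &
         E i * T i.+1 * E i = rr *: E i /\ E i.+1 * T i * E i.+1 = rr *: E i.+1]) /\
  (forall i j, (1 <= i <= n.-1)%N -> (1 <= j <= n.-1)%N ->
     (i.+1 < j)%N || (j.+1 < i)%N -> T i * T j = T j * T i).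

Definition Y (A : algType Kf) (T E : nat -> A) (i k : nat) : A :=
  (- (qint k.+1)^-1) *:
    (qint k *: T i - qq ^+ k *: 1
     + ((qq ^+ k - qq ^- k) / (1 + rr * qq ^ (1 - (2 * k)%:Z))) *: E i).

(* Each Y_i(k) is a combination of 1, T_i and E_i.  Both sides of the Yang-Baxter
   relation are products of three such combinations in two adjacent generators; once
   the BMW relations are used to reduce every word of length at most three, both sides
   become combinations of the fifteen words 1, T_i, T_(i+1), E_i, E_(i+1), T_i T_(i+1),
   T_(i+1) T_i, T_i T_(i+1) T_i, T_i E_(i+1), E_(i+1) T_i, E_i T_(i+1), T_(i+1) E_i,
   E_i E_(i+1), E_(i+1) E_i, T_(i+1) E_i T_(i+1), and the relation reduces to fifteen
   identities between rational functions of q, r, q^k and q^h.  For distant indices,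
   T_j and T_j^-1 commute with T_i and T_i^-1, hence with E_i = 1 - (T_i - T_i^-1)/(q - q^-1). *)

From mathcomp Require Import all_boot all_order all_algebra.
From mathcomp Require Import ring zify.
Import GRing.Theory.
Set Implicit Arguments. Unset Strict Implicit. Unset Printing Implicit Defensive.
Local Open Scope ring_scope.

Inductive linexpr (K : Type) :=
  | LinAtom of nat
  | LinScale of K & linexpr K
  | LinAdd of linexpr K & linexpr K
  | LinOpp of linexpr K
  | LinZero.

Section LinearExpressions.
Variables (K : nzRingType) (V : lmodType K) (w : nat -> V).

Fixpoint linexpr_eval (t : linexpr K) : V :=
  match t with
  | LinAtom j => w j
  | LinScale c t => c *: linexpr_eval t
  | LinAdd t1 t2 => linexpr_eval t1 + linexpr_eval t2
  | LinOpp t => - linexpr_eval t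
  | LinZero => 0
  end.

Fixpoint linexpr_coef (t : linexpr K) (i : nat) : K :=
  match t with
  | LinAtom j => (eqn i j)%:R
  | LinScale c t => c * linexpr_coef t i
  | LinAdd t1 t2 => linexpr_coef t1 i + linexpr_coef t2 i
  | LinOpp t => - linexpr_coef t i
  | LinZero => 0
  end.

Variable N : nat.
Hypothesis w_eq0 : forall j, (N <= j)%N -> w j = 0.

Lemma linexpr_evalE t : linexpr_eval t = \sum_(i < N) linexpr_coef t i *: w i.
Proof.
elim: t => [j|c t IH|t1 IH1 t2 IH2|t IH|] /=.
- have [ltjN|leNj] := ltnP j N; last first.
    rewrite w_eq0 // big1 // => i _; case: eqnP => [eq_ij|_]; rewrite ?scale0r //.
    by move: (ltn_ord i); rewrite eq_ij ltnNge leNj.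
  rewrite (bigD1 (Ordinal ltjN)) //= (introT eqnP erefl) scale1r big1 ?addr0 // => i /eqP neq_ij.
  by case: eqnP => [eq_ij|_]; rewrite ?scale0r //; case: neq_ij; apply: val_inj.
- by rewrite IH scaler_sumr; apply: eq_bigr => i _; rewrite scalerA.
- by rewrite IH1 IH2 -big_split; apply: eq_bigr => i _; rewrite scalerDl.
- by rewrite IH -sumrN; apply: eq_bigr => i _; rewrite scaleNr.
- by rewrite big1 // => i _; rewrite scale0r.
Qed.

Lemma linexpr_eval_eq t1 t2 :
  (forall i, (i < N)%N -> linexpr_coef t1 i = linexpr_coef t2 i) ->
  linexpr_eval t1 = linexpr_eval t2.
Proof. by move=> eq_coef; rewrite !linexpr_evalE; apply: eq_bigr => i _; rewrite eq_coef. Qed.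

End LinearExpressions.

Ltac atom_index t atoms :=
  lazymatch atoms with
  | ?a :: ?atoms' =>
      lazymatch constr:(ltac:(first [unify t a; exact true | exact false]) : bool) with
      | true => constr:(0%N)
      | false => let n := atom_index t atoms' in constr:(n.+1)
      end
  end.

Ltac reify_linexpr K atoms t :=
  lazymatch t with
  | ?u + ?v =>
      let u' := reify_linexpr K atoms u in let v' := reify_linexpr K atoms v in
      constr:(LinAdd u' v')
  | - ?u => let u' := reify_linexpr K atoms u in constr:(LinOpp u')
  | ?c *: ?u => let u' := reify_linexpr K atoms u in constr:(LinScale c u')
  | 0 => constr:(@LinZero K)
  | _ => let n := atom_index t atoms in constr:(@LinAtom K n)
  end.

Ltac solve_coefficients atoms solver :=
  lazymatch atoms with
  | nil => by []
  | _ :: ?atoms' =>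
      case=> [_|]; [cbv beta iota delta [linexpr_coef eqn]; solver
                   | solve_coefficients atoms' solver]
  end.

(* [linear_eq K atoms solver] proves an equation between two K-linear combinations of
   the vectors [atoms] by comparing coefficients; [solver] closes each scalar equation. *)
Ltac linear_eq K atoms solver :=
  lazymatch goal with |- ?L = ?R =>
    let u := reify_linexpr K atoms L in let v := reify_linexpr K atoms R in
    change (linexpr_eval (fun n => nth 0 atoms n) u = linexpr_eval (fun n => nth 0 atoms n) v)
  end;
  apply: (@linexpr_eval_eq _ _ _ (size atoms));
  [by move=> ? ?; rewrite nth_default | solve_coefficients atoms solver].

Section BMWRelations.
Variables (K : fieldType) (A : algType K) (r s : K).
Hypotheses (r_neq0 : r != 0) (s_neq0 : s != 0).
Let x := 1 + (r - r^-1) / s.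

Lemma bmw_quadratic (t t' e : A) :
  t' * t = 1 -> t - t' = s *: (1 - e) -> e * t = r^-1 *: e ->
  t * t = 1 + s *: t - (s / r) *: e.
Proof.
move=> tK tE et; rewrite -[t * t](subrK (t' * t)) -mulrBl tE tK -scalerAl.
by rewrite mulrBl mul1r et scalerBr scalerA addrC addrA.
Qed.

Variables t1 e1 t2 e2 : A.

Lemma mul_ETT : x != 0 ->
  t2 * t2 = 1 + s *: t2 - (s / r) *: e2 -> e1 * t1 = r^-1 *: e1 -> e1 * e1 = x *: e1 ->
  t2 * t1 * t2 = t1 * t2 * t1 -> t2 * t1 * e2 = e1 * e2 ->
  e1 * t2 * t1 = e1 * e2.
Proof.
move=> x_neq0 t2t2 e1t1 e1e1 braid t2t1e2.
have Xt2 : e1 * t2 * t1 * t2 = r^-1 *: (e1 * t2 * t1).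
  by rewrite -2!mulrA (mulrA t2) braid !mulrA e1t1 -!scalerAl.
have Xe2 : e1 * t2 * t1 * e2 = x *: (e1 * e2).
  by rewrite -2!mulrA (mulrA t2) t2t1e2 mulrA e1e1 -scalerAl.
move: (e1 * t2 * t1) Xt2 Xe2 => X Xt2 Xe2.
(* Expanding X t2 t2 by the quadratic relation yields (s / r) x X = (s / r) x e1 e2. *)
have c_neq0 : s / r * x != 0 by rewrite !mulf_neq0 ?invr_eq0.
have := mulrA X t2 t2; rewrite t2t2 Xt2 -scalerAl Xt2 scalerA.
rewrite !(mulrDr, mulrN) !mulr1 -!scalerAr Xt2 Xe2 => key.
apply: (scalerI c_neq0); apply: (addIr ((r^-1 * r^-1) *: X)); rewrite -{2}key.
linear_eq K [:: X; e1 * e2] ltac:(rewrite /x; field; by rewrite ?r_neq0 ?s_neq0).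
Qed.

Lemma mul_TEE :
  t1 * t1 = 1 + s *: t1 - (s / r) *: e1 -> t1 * t2 * e1 = e2 * e1 -> e1 * t2 * e1 = r *: e1 ->
  t1 * e2 * e1 = t2 * e1 + s *: (e2 * e1) - s *: e1.
Proof.
move=> t1t1 t1t2e1 e1t2e1.
rewrite -mulrA -{1}t1t2e1 !mulrA t1t1 !(mulrDl, mulNr) mul1r -!scalerAl.
by rewrite t1t2e1 e1t2e1 scalerA mulfVK.
Qed.

Lemma mul_EET :
  t1 * t1 = 1 + s *: t1 - (s / r) *: e1 -> e1 * t2 * t1 = e1 * e2 -> e1 * t2 * e1 = r *: e1 ->
  e1 * e2 * t1 = e1 * t2 + s *: (e1 * e2) - s *: e1.
Proof.
move=> t1t1 e1t2t1 e1t2e1.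
rewrite -{1}e1t2t1 -mulrA t1t1 !(mulrDr, mulrN) mulr1 -!scalerAr e1t2t1 e1t2e1.
by rewrite scalerA mulfVK.
Qed.

Lemma mul_TET (t2' : A) :
  t2' * t2 = 1 -> t2 - t2' = s *: (1 - e2) -> t2 * t1 * e2 = e1 * e2 ->
  e1 * e2 * t1 = e1 * t2 + s *: (e1 * e2) - s *: e1 ->
  t2 * e1 * e2 = t1 * e2 + s *: (e1 * e2) - s *: e2 ->
  e2 * e1 * t2 = e2 * t1 + s *: (e2 * e1) - s *: e2 ->
  e2 * e1 * e2 = e2 ->
  t1 * e2 * t1 = t2 * e1 * t2 - s *: (e1 * t2) + s *: (e2 * t1) + s *: (t1 * e2)
                 - s *: (t2 * e1) + (s * s) *: e1 - (s * s) *: e2.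
Proof.
move=> t2K t2E t2t1e2 e1e2t1 t2e1e2 e2e1t2 e2e1e2.
have t2'E : t2' = t2 - s *: (1 - e2) by rewrite -t2E opprB addrC subrK.
have -> : t1 * e2 * t1 = t2' * (e1 * e2 * t1) by rewrite -t2t1e2 !mulrA t2K mul1r.
rewrite e1e2t1 t2'E.
rewrite !(mulrDl, mulrDr, mulNr, mulrN, mul1r, =^~ scalerAl, =^~ scalerAr, mulrA).
rewrite t2e1e2 e2e1t2 e2e1e2.
linear_eq K [:: t2 * e1 * t2; e1 * t2; e2 * t1; t1 * e2; t2 * e1; e1; e2; e1 * e2; e2 * e1] ltac:(ring).
Qed.

End BMWRelations.

(* Y_i(k) up to the factor -1/[k+1] (see Y_baxter), as a function of P = q^k, so that
   the spectral parameter k + h becomes the product of the parameters. *)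
Definition baxter (K : fieldType) (A : algType K) (q r : K) (t e : A) (P : K) : A :=
  ((P - P^-1) / (q - q^-1)) *: t - P *: 1 + ((P - P^-1) / (1 + r * (q / P ^+ 2))) *: e.

Section YangBaxter.
Variables (K : fieldType) (A : algType K) (q r : K) (t1 t1' e1 t2 t2' e2 : A).
Let s := q - q^-1.
Let x := 1 + (r - r^-1) / s.
Hypotheses (q_neq0 : q != 0) (r_neq0 : r != 0) (s_neq0 : s != 0) (x_neq0 : x != 0).
Hypotheses (t1K : t1' * t1 = 1) (t1E : t1 - t1' = s *: (1 - e1)) (e1e1 : e1 * e1 = x *: e1)
  (e1t1 : e1 * t1 = r^-1 *: e1) (t1e1 : t1 * e1 = r^-1 *: e1).
Hypotheses (t2K : t2' * t2 = 1) (t2E : t2 - t2' = s *: (1 - e2)) (e2e2 : e2 * e2 = x *: e2)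
  (e2t2 : e2 * t2 = r^-1 *: e2) (t2e2 : t2 * e2 = r^-1 *: e2).
Hypotheses (braid : t1 * t2 * t1 = t2 * t1 * t2)
  (e1e2e1 : e1 * e2 * e1 = e1) (e2e1e2 : e2 * e1 * e2 = e2)
  (t1t2e1 : t1 * t2 * e1 = e2 * e1) (t2t1e2 : t2 * t1 * e2 = e1 * e2)
  (e1t2e1 : e1 * t2 * e1 = r *: e1) (e2t1e2 : e2 * t1 * e2 = r *: e2).

Let t1t1 := bmw_quadratic t1K t1E e1t1.
Let t2t2 := bmw_quadratic t2K t2E e2t2.
Let e1t2t1 := mul_ETT r_neq0 s_neq0 x_neq0 t2t2 e1t1 e1e1 (esym braid) t2t1e2.
Let e2t1t2 := mul_ETT r_neq0 s_neq0 x_neq0 t1t1 e2t2 e2e2 braid t1t2e1.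
Let t1e2e1 := mul_TEE r_neq0 t1t1 t1t2e1 e1t2e1.
Let t2e1e2 := mul_TEE r_neq0 t2t2 t2t1e2 e2t1e2.
Let e1e2t1 := mul_EET r_neq0 t1t1 e1t2t1 e1t2e1.
Let e2e1t2 := mul_EET r_neq0 t2t2 e2t1t2 e2t1e2.
Let t1e2t1 := mul_TET t2K t2E t2t1e2 e1e2t1 t2e1e2 e2e1t2 e2e1e2.

Lemma baxter_braid (Q H : K) :
  Q != 0 -> H != 0 -> Q ^+ 2 + r * q != 0 -> H ^+ 2 + r * q != 0 -> (Q * H) ^+ 2 + r * q != 0 ->
  baxter q r t1 e1 Q * baxter q r t2 e2 (Q * H) * baxter q r t1 e1 H =
  baxter q r t2 e2 H * baxter q r t1 e1 (Q * H) * baxter q r t2 e2 Q.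
Proof.
move=> Q_neq0 H_neq0 dQ_neq0 dH_neq0 dQH_neq0.
have qq1_neq0 : q * q - 1 != 0.
  have -> : q * q - 1 = s * q by rewrite /s mulrBl mulVf.
  by rewrite mulf_neq0.
rewrite /baxter -!scaleNr.
set a1 := (Q - Q^-1) / _. set a2 := (Q * H - (Q * H)^-1) / (q - q^-1). set a3 := (H - H^-1) / (q - q^-1).
set c1 := (Q - Q^-1) / _. set c2 := (Q * H - (Q * H)^-1) / _. set c3 := (H - H^-1) / _.
set b1 := - Q. set b2 := - (Q * H). set b3 := - H.
rewrite !(mulrDl, mulrDr).
rewrite !(=^~ scalerAl, =^~ scalerAr, scalerA, mul1r, mulr1).
rewrite ?t1t1 ?t2t2 ?t1e1 ?e1t1 ?t2e2 ?e2t2 ?e1e1 ?e2e2 -?braid ?t1t2e1 ?t2t1e2 ?e1t2t1 ?e2t1t2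
  ?e1t2e1 ?e2t1e2 ?e1e2e1 ?e2e1e2 ?t1e2e1 ?t2e1e2 ?e1e2t1 ?e2e1t2 ?t1e2t1.
linear_eq K [:: 1; t1; t2; e1; e2; t1 * t2; t2 * t1; t1 * t2 * t1; t1 * e2; e2 * t1;
                e1 * t2; t2 * e1; e1 * e2; e2 * e1; t2 * e1 * t2]
  ltac:(rewrite /a1 /a2 /a3 /b1 /b2 /b3 /c1 /c2 /c3 /x /s; field;
        by rewrite ?q_neq0 ?r_neq0 ?qq1_neq0 ?Q_neq0 ?H_neq0 ?dQ_neq0 ?dH_neq0 ?dQH_neq0).
Qed.

End YangBaxter.

Section Commutation.
Variables (K : fieldType) (A : algType K).

Lemma commrZ (u v : A) (c : K) : GRing.comm u v -> GRing.comm u (c *: v).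
Proof. by rewrite /GRing.comm -scalerAr -scalerAl => ->. Qed.

Lemma commr_inv (u w w' : A) : w * w' = 1 -> w' * w = 1 -> GRing.comm u w -> GRing.comm u w'.
Proof.
move=> ww' w'w uw.
by rewrite /GRing.comm -[u * w']mul1r -w'w -!mulrA (mulrA w) -uw -mulrA ww' mulr1.
Qed.

Lemma commr_baxter (q r P c : K) (u t t' e : A) :
  q - q^-1 != 0 -> t - t' = (q - q^-1) *: (1 - e) ->
  GRing.comm u t -> GRing.comm u t' -> GRing.comm u (c *: baxter q r t e P).
Proof.
move=> s_neq0 tE ut ut'.
have ue : GRing.comm u e.
  have -> : e = 1 - (q - q^-1)^-1 *: (t - t') by rewrite tE scalerA mulVf // scale1r opprB addrC subrK.
  exact: commrB (commr1 _) (commrZ _ (commrB ut ut')).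
rewrite /baxter; apply/commrZ/commrD; last exact: commrZ.
exact: commrB (commrZ _ ut) (commrZ _ (commr1 _)).
Qed.

End Commutation.

Lemma scale_mul3 (K : fieldType) (A : algType K) (a b c : K) (x1 x2 x3 y1 y2 y3 : A) :
  x1 * x2 * x3 = y1 * y2 * y3 ->
  (a *: x1) * (b *: x2) * (c *: x3) = (c *: y1) * (b *: y2) * (a *: y3).
Proof.
by move=> eq_xy; rewrite -!scalerAl -!scalerAr -!scalerAl !scalerA eq_xy; congr (_ *: _); ring.
Qed.

Lemma tofrac_neq0 (p : {poly {poly rat}}) (c : {poly rat}) (d : rat) :
  p.[c].[d] != 0 -> tofrac p != 0 :> Kf.
Proof. by rewrite tofrac_eq0; apply: contraNneq => ->; rewrite !horner0. Qed.

Lemma qq_neq0 : qq != 0.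
Proof. by apply: (@tofrac_neq0 _ 0 1); rewrite hornerC hornerX oner_eq0. Qed.

Lemma rr_neq0 : rr != 0.
Proof. by apply: (@tofrac_neq0 _ 1 1); rewrite hornerX hornerC oner_eq0. Qed.

Lemma qq2_neq1 : qq * qq - 1 != 0.
Proof.
have -> : qq * qq - 1 = tofrac (('X * 'X - 1)%:P).
  by rewrite /qq polyCB polyCM polyC1 tofracB tofracM tofrac1.
by apply: (@tofrac_neq0 _ 0 0); rewrite hornerC !hornerE oppr_eq0 oner_eq0.
Qed.

Lemma qq_sub_inv_neq0 : qq - qq^-1 != 0.
Proof.
have -> : qq - qq^-1 = (qq * qq - 1) / qq by rewrite mulrBl mul1r mulfK ?qq_neq0.
by rewrite mulf_neq0 ?invr_eq0 ?qq_neq0 ?qq2_neq1.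
Qed.

Lemma xx_neq0 : xx != 0.
Proof.
have xE (F : fieldType) (q r : F) : q != 0 -> r != 0 -> q * q - 1 != 0 ->
    1 + (r - r^-1) / (q - q^-1) = ((q * q - 1) * r + (r * r - 1) * q) / (r * (q * q - 1)).
  by move=> q_neq0 r_neq0 q2_neq1; field; rewrite q_neq0 r_neq0 q2_neq1.
rewrite /xx (xE _ qq rr qq_neq0 rr_neq0 qq2_neq1).
apply: mulf_neq0 (invr_neq0 (mulf_neq0 rr_neq0 qq2_neq1)).
have -> : (qq * qq - 1) * rr + (rr * rr - 1) * qq
          = tofrac (('X * 'X - 1)%:P * 'X + ('X * 'X - 1) * ('X)%:P).
  by rewrite /qq /rr !(polyCB, polyCM, polyC1, tofracB, tofracD, tofracM, tofrac1).
by apply: (@tofrac_neq0 _ 1 0); rewrite !hornerE oppr_eq0 oner_eq0.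
Qed.

Lemma qq_expn_den_neq0 k : (qq ^+ k) ^+ 2 + rr * qq != 0.
Proof.
have -> : (qq ^+ k) ^+ 2 + rr * qq = tofrac (('X ^+ k)%:P ^+ 2 + 'X * ('X)%:P).
  by rewrite /qq /rr polyC_exp !(tofracD, tofracM, tofracXn).
apply: (@tofrac_neq0 _ 1 1); rewrite !hornerE !expr1n.
by rewrite Num.Theory.paddr_eq0 ?Num.Theory.ler01 // oner_eq0.
Qed.

Lemma Y_baxter (A : algType Kf) (T E : nat -> A) i k :
  Y T E i k = - (qint k.+1)^-1 *: baxter qq rr (T i) (E i) (qq ^+ k).
Proof.
by rewrite /Y /baxter expfzDr ?qq_neq0 // expr1z -exprM -exprnN mulnC.
Qed.

Lemma commr_Y (A : algType Kf) (T Ti E : nat -> A) (u : A) i k :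
  T i - Ti i = (qq - qq^-1) *: (1 - E i) ->
  GRing.comm u (T i) -> GRing.comm u (Ti i) -> GRing.comm u (Y T E i k).
Proof. by rewrite Y_baxter; apply: commr_baxter qq_sub_inv_neq0. Qed.

Theorem proposition3p2 (n : nat) (hn : (3 <= n)%N) (A : algType Kf)
  (T Ti E : nat -> A) (hB : bmw_rel n T Ti E) :
  (forall (k h i : nat), (1 <= i <= n - 2)%N ->
     Y T E i k * Y T E i.+1 (k + h) * Y T E i h
     = Y T E i.+1 h * Y T E i (k + h) * Y T E i.+1 k) /\
  (forall (k h i j : nat), (1 <= i <= n.-1)%N -> (1 <= j <= n.-1)%N ->
     (i.+1 < j)%N || (j.+1 < i)%N ->
     Y T E i k * Y T E j h = Y T E j h * Y T E i k).
Proof.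
case: hB => gen [adj far]; split.
- move=> k h i hi.
  have /gen[_ t1K t1E e1e1 [e1t1 t1e1]] : (1 <= i <= n.-1)%N by lia.
  have /gen[_ t2K t2E e2e2 [e2t2 t2e2]] : (1 <= i.+1 <= n.-1)%N by lia.
  have [braid [e1e2e1 e2e1e2] [t1t2e1 t2t1e2] [e1t2e1 e2t1e2]] := adj i hi.
  rewrite !Y_baxter exprD; apply: scale_mul3.
  apply: (baxter_braid qq_neq0 rr_neq0 qq_sub_inv_neq0 xx_neq0 t1K t1E e1e1 e1t1 t1e1
            t2K t2E e2e2 e2t2 t2e2 braid e1e2e1 e2e1e2 t1t2e1 t2t1e2 e1t2e1 e2t1e2
            (expf_neq0 _ qq_neq0) (expf_neq0 _ qq_neq0) (qq_expn_den_neq0 k) (qq_expn_den_neq0 h)).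
  by rewrite -exprD qq_expn_den_neq0.
- move=> k h i j hi hj hij.
  have [Ti_inv Ti_inv' TiE _ _] := gen i hi.
  have [Tj_inv Tj_inv' TjE _ _] := gen j hj.
  have TiTj := far i j hi hj hij.
  have TiTj' := commr_inv Tj_inv Tj_inv' TiTj.
  have Ti'Tj := commr_inv Ti_inv Ti_inv' (commr_sym TiTj).
  have Ti'Tj' := commr_inv Tj_inv Tj_inv' (commr_sym Ti'Tj).
  by apply: commr_Y TjE _ _; apply/commr_sym; apply: commr_Y TiE _ _.
Qed.
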